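(* Suppose that $A$ is normally elliptic with ellipticity constant $\kappa$ and symbol $a$ of order $m$. Then there exist $\varphi, \gamma, \omega, M > 0$ such that for all $\xi \in \mathbb{R}^d$ and all $\lambda \in \Sigma_{\varphi,-\gamma\lvert \xi \rvert^m + \omega}$ the operator $\lambda+a(\xi)$ is invertible and \[ \lVert (\lambda + a(\xi))^{-1} \rVert \leq \frac{M}{\lvert \xi \rvert^m + \lvert\lambda + \gamma\lvert \xi\rvert^m \rvert} . \] The parameters $\varphi, \gamma$ depend only on $a_m$, while $\omega$ depends on $a_m$ and $N_0(a-a_m)$. Moreover, one can choose $M = 4\kappa +2$.
   Context: Let $X$ be a Banach space, $d,m\in\mathbb{N}$, and $a(\xi)=\sum_{\lvert\alpha\rvert\le m}a_\alpha\xi^\alpha$ with $a_\alpha\in\mathcal{L}(X)$ and $a_\alpha\neq0$ for some $\lvert\alpha\rvert=m$; $a_m(\xi)=\sum_{\lvert\alpha\rvert=m}a_\alpha\xi^\alpha$ is its principal symbol and $A=a(D)$. For $\vartheta\in[0,\pi)$, $\omega\in\mathbb{R}$: $\Sigma_{\vartheta,\omega}=\{z\in\mathbb{C}:\lvert\arg(z-\omega)\rvert\le\vartheta\}\cup\{0\}$. $A$ is $(\kappa,\vartheta,\omega)$-elliptic ($\kappa\ge1$) if for all $\lvert\xi\rvert=1$ the resolvent set of $-a_m(\xi)$ contains $\Sigma_{\vartheta,\omega}$ and $\lVert(\lambda+a_m(\xi))^{-1}\rVert\le\kappa/(1+\lvert\lambda-\omega\rvert)$ for $\lambda\in\Sigma_{\vartheta,\omega}$;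 normally elliptic with ellipticity constant $\kappa$ means $(\kappa,\pi/2,0)$-elliptic. For an $\mathcal{L}(X)$-valued polynomial $p$ of degree $n$ and a multi-index $\alpha$, $N_\alpha(p)=\max_{\beta\le\alpha}\sup_{\xi\in\mathbb{R}^d}\lVert\partial^\beta p(\xi)\rVert/(1+\lvert\xi\rvert)^{n-\lvert\beta\rvert}$ (componentwise order on multi-indices); here $a-a_m$ is regarded as a polynomial of degree $m-1$. *)

From Stdlib Require Import Reals Lra List Arith.
From Coquelicot Require Import Coquelicot.
Open Scope R_scope.

(* Multi-indices in N^d are lists of length d.  [mindex d n] enumerates
   (without repetition) all multi-indices alpha with |alpha| <= n. *)
Fixpoint mindex (d n : nat) : list (list nat) :=
  match d with
  | O => nil :: nil
  | S d' => flat_map (fun k => map (cons k) (mindex d' (n - k))) (seq 0 (S n))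
  end.

Definition mabs (alpha : list nat) : nat := fold_right Nat.add O alpha.

(* xi^alpha = prod_i xi_i^{alpha_i}, with xi : R^d represented as nat -> R
   (only the coordinates 0..d-1 are ever used). *)
Fixpoint monom_from (xi : nat -> R) (k : nat) (alpha : list nat) : R :=
  match alpha with
  | nil => 1
  | a :: t => (xi k ^ a) * monom_from xi (S k) t
  end.
Definition monom (xi : nat -> R) (alpha : list nat) : R := monom_from xi O alpha.

Definition vnorm (d : nat) (xi : nat -> R) : R :=
  sqrt (fold_right Rplus 0 (map (fun i => xi i ^ 2) (seq 0 d))).

Section Symbols.
Context {X : CompleteNormedModule C_AbsRing}.

Definition sum_over (s : list (list nat)) (c : list nat -> X -> X)
  (xi : nat -> R) (x : X) : X :=
  fold_right (fun alpha acc => plus (scal (RtoC (monom xi alpha)) (c alpha x)) acc)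
    zero s.

Definition principal (d m : nat) (c : list nat -> X -> X) (xi : nat -> R) : X -> X :=
  sum_over (filter (fun alpha => Nat.eqb (mabs alpha) m) (mindex d m)) c xi.

Definition poly_sym (d n : nat) (c : list nat -> X -> X) (xi : nat -> R) : X -> X :=
  sum_over (mindex d n) c xi.

Definition shift (lam : C) (T : X -> X) : X -> X := fun x => plus (scal lam x) (T x).

Definition inv_bound (T : X -> X) (c : R) : Prop :=
  exists S : X -> X, is_linear S /\ (forall x, S (T x) = x) /\ (forall x, T (S x) = x)
    /\ (forall x, norm (S x) <= c * norm x).

End Symbols.

(* Sigma_{th,w} = {z : |arg(z - w)| <= th} together with the vertex w,
   written in polar form z - w = r e^{it}, r > 0, |t| <= th. *)
Definition sector (th w : R) (z : C) : Prop :=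
  z = RtoC w \/
  exists r t : R, 0 < r /\ Rabs t <= th /\ z = Cplus (RtoC w) (r * cos t, r * sin t)%R.

Definition normally_elliptic {X : CompleteNormedModule C_AbsRing}
  (d m : nat) (am : list nat -> X -> X) (kappa : R) : Prop :=
  1 <= kappa /\
  forall xi : nat -> R, vnorm d xi = 1 ->
  forall lam : C, sector (PI / 2) 0 lam ->
    inv_bound (shift lam (principal d m am xi)) (kappa / (1 + Cmod (Cminus lam (RtoC 0)))).

(* N_0(b) for b of degree n = m - 1:
   sup_{xi} ||b(xi)|| / (1 + |xi|)^n, with ||T|| = sup_{||x|| <= 1} ||T x||. *)
Definition Nzero {X : CompleteNormedModule C_AbsRing} (d n : nat)
  (b : list nat -> X -> X) : Rbar :=
  Lub_Rbar (fun r => exists (xi : nat -> R) (x : X), norm x <= 1 /\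
              r = norm (poly_sym d n b xi x) / (1 + vnorm d xi) ^ n).

From Stdlib Require Import Reals List Lra Lia.
From Coquelicot Require Import Coquelicot.
Open Scope R_scope.

(* For Re mu > 0, homogeneity of a_m reduces mu + a_m(xi) to the unit sphere,
   where normal ellipticity gives ||(mu + a_m(xi))^-1|| <= kappa / (|xi|^m + |mu|).
   With gamma = 1 / (4 kappa) and mu = lambda + gamma |xi|^m, write
   lambda + a(xi) = (mu + a_m(xi)) + (b(xi) - gamma |xi|^m), b = a - a_m.
   The perturbation has norm at most gamma |xi|^m + N_0(b) (1 + |xi|)^(m-1),
   and omega is chosen so that N_0(b) (1 + |xi|)^(m-1) is absorbed by
   (|xi|^m + omega) / (4 kappa).  The perturbation is then at most half the
   inverse of the resolvent bound, so a Neumann series inverts lambda + a(xi)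
   with twice that bound.  The half-plane phi = pi/2 works since Re mu >= omega. *)

(* Rewriting with Coquelicot's generic lemmas must see through the projections
   from CompleteNormedModule to its parent structures. *)
Set Keyed Unification.

Lemma minus_plus_cancel {G : AbelianGroup} (x y : G) : plus (minus x y) y = x.
Proof. unfold minus. now rewrite <- plus_assoc, plus_opp_l, plus_zero_r. Qed.

Lemma plus_minus_cancel {G : AbelianGroup} (x y : G) : minus (plus x y) y = x.
Proof. unfold minus. now rewrite <- plus_assoc, plus_opp_r, plus_zero_r. Qed.

Lemma minus_eq_zero_eq {G : AbelianGroup} (x y : G) : minus x y = zero -> x = y.
Proof. intros E. now rewrite <- (minus_plus_cancel x y), E, plus_zero_l. Qed.

Lemma plus_eq_of_minus_eq_opp {G : AbelianGroup} (x y z : G) :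
  minus x y = opp z -> plus x z = y.
Proof.
  intros E. rewrite <- (opp_opp z), <- E, opp_minus, plus_comm.
  apply minus_plus_cancel.
Qed.

Lemma plus_plus_shuffle {G : AbelianMonoid} (a b c e : G) :
  plus (plus a b) (plus c e) = plus (plus a c) (plus b e).
Proof.
  rewrite <- !plus_assoc. f_equal. rewrite !plus_assoc. f_equal. apply plus_comm.
Qed.

Lemma is_linear_plus_fun {K : AbsRing} {U V : NormedModule K} (f g : U -> V) :
  is_linear f -> is_linear g -> is_linear (fun x => plus (f x) (g x)).
Proof.
  intros Hf Hg.
  apply (is_linear_comp (fun x => (f x, g x)) (fun p : V * V => plus (fst p) (snd p))).
  - exact (is_linear_prod _ _ Hf Hg).
  - exact is_linear_plus.
Qed.

Lemma is_series_linear {K : AbsRing} {U W : NormedModule K} (L : U -> W)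
  (a : nat -> U) (l : U) :
  is_linear L -> is_series a l -> is_series (fun n => L (a n)) (L l).
Proof.
  intros HL Ha.
  apply (filterlim_ext (fun n => L (sum_n a n))).
  - intros n; induction n as [|n IH].
    + now rewrite !sum_O.
    + now rewrite !sum_Sn, linear_plus, IH.
  - exact (filterlim_comp _ _ _ _ L _ _ _ Ha (linear_cont L l HL)).
Qed.

Section Neumann.
Context {K : AbsRing} {V : CompleteNormedModule K}.
Variables (T : V -> V) (q : R).
Hypotheses (T_linear : is_linear T) (q_ge0 : 0 <= q) (q_lt1 : q < 1)
  (T_norm : forall x, norm (T x) <= q * norm x).

Lemma id_plus_surj (y : V) : exists x, plus x (T x) = y.
Proof.
  (* x is the sum of the Neumann series of the (-T)^n y; shifting the index gives x - y = -T x. *)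
  set (a n := Nat.iter n (fun x => opp (T x)) y).
  assert (a_norm : forall n, norm (a n) <= q ^ n * norm y).
  { induction n as [|n IH]; simpl; [lra|].
    rewrite norm_opp. specialize (T_norm (a n)). nra. }
  destruct (ex_series_le a (fun n => q ^ n * norm y) a_norm) as [x Hx].
  { apply ex_series_scal_r, ex_series_geom. rewrite Rabs_pos_eq; lra. }
  exists x.
  assert (Hshift : is_series (fun n => a (S n)) (minus x y)).
  { apply is_series_incr_1. change (a O) with y.
    exact (eq_ind_r (is_series a) Hx (minus_plus_cancel x y)). }
  assert (Hlin : is_series (fun n => a (S n)) (opp (T x)))
    by exact (is_series_opp _ _ (is_series_linear T a x T_linear Hx)).
  exact (plus_eq_of_minus_eq_opp _ _ _ (filterlim_locally_unique _ _ _ Hshift Hlin)).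
Qed.

Lemma id_plus_norm (x : V) : (1 - q) * norm x <= norm (plus x (T x)).
Proof.
  assert (E : x = plus (plus x (T x)) (opp (T x)))
    by (symmetry; exact (plus_minus_cancel x (T x))).
  assert (H := norm_triangle (plus x (T x)) (opp (T x))).
  rewrite <- E, norm_opp in H.
  specialize (T_norm x). lra.
Qed.

Lemma id_plus_inj (x x' : V) : plus x (T x) = plus x' (T x') -> x = x'.
Proof.
  intros E.
  assert (Hz : plus (minus x x') (T (minus x x')) = zero).
  { rewrite (linear_minus (fun x => plus x (T x)))
      by exact (is_linear_plus_fun _ _ is_linear_id T_linear).
    rewrite E. apply minus_eq_zero. }
  assert (Hn := id_plus_norm (minus x x')).
  rewrite Hz, norm_zero in Hn.
  assert (Hx : norm (minus x x') = 0).
  { pose proof (norm_ge_0 (minus x x')). nra. }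
  exact (minus_eq_zero_eq _ _ (norm_eq_zero _ Hx)).
Qed.

Definition id_plus_inv (y : V) : V := iota (fun x : V => plus x (T x) = y).

Lemma id_plus_invK (x : V) : id_plus_inv (plus x (T x)) = x.
Proof. apply iota_unique; [|easy]. intros x' E. now apply id_plus_inj. Qed.

Lemma id_plus_invE (y : V) : plus (id_plus_inv y) (T (id_plus_inv y)) = y.
Proof. destruct (id_plus_surj y) as [x <-]. now rewrite id_plus_invK. Qed.

Lemma id_plus_inv_norm (y : V) : norm (id_plus_inv y) <= / (1 - q) * norm y.
Proof.
  rewrite <- (id_plus_invE y) at 2.
  assert (H := id_plus_norm (id_plus_inv y)).
  apply (Rmult_le_reg_l (1 - q)); [lra|].
  rewrite <- Rmult_assoc, Rinv_r, Rmult_1_l by lra. exact H.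
Qed.

Lemma id_plus_inv_linear : is_linear id_plus_inv.
Proof.
  assert (S_linear := is_linear_plus_fun _ _ is_linear_id T_linear).
  split.
  - intros a b. apply id_plus_inj.
    rewrite (linear_plus (fun x => plus x (T x)) S_linear), !id_plus_invE. easy.
  - intros k a. apply id_plus_inj.
    rewrite (linear_scal (fun x => plus x (T x)) S_linear), !id_plus_invE. easy.
  - exists (/ (1 - q)). split; [apply Rinv_0_lt_compat; lra|].
    exact id_plus_inv_norm.
Qed.

End Neumann.

Section ComplexOperators.
Context {X : CompleteNormedModule C_AbsRing}.

Lemma is_linear_scal_C (k : C) : is_linear (fun x : X => scal k x).
Proof. apply (is_linear_scal_r (K := C_AbsRing) (V := X)). exact Cmult_comm. Qed.

Lemma linear_norm_le_of_unit_ball (L : X -> X) (M : R) :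
  is_linear L -> (forall y, norm y <= 1 -> norm (L y) <= M) ->
  forall x, norm (L x) <= M * norm x.
Proof.
  intros L_linear HM x.
  destruct (Rle_lt_or_eq_dec _ _ (norm_ge_0 x)) as [Hx|Hx].
  - set (y := scal (RtoC (/ norm x)) x).
    assert (Hy : norm y <= 1).
    { eapply Rle_trans; [exact (norm_scal (RtoC (/ norm x)) x)|].
      change (abs (RtoC (/ norm x))) with (Cmod (RtoC (/ norm x))).
      rewrite Cmod_R, Rabs_pos_eq by (apply Rlt_le, Rinv_0_lt_compat, Hx).
      right. field. lra. }
    assert (Ex : L x = scal (RtoC (norm x)) (L y)).
    { unfold y. rewrite (linear_scal L L_linear), scal_assoc.
      replace (mult (RtoC (norm x)) (RtoC (/ norm x))) with (RtoC 1).
      - now rewrite scal_one.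
      - change (RtoC 1 = Cmult (RtoC (norm x)) (RtoC (/ norm x))).
        now rewrite <- RtoC_mult, Rinv_r by lra. }
    rewrite Ex. eapply Rle_trans; [exact (norm_scal _ (L y))|].
    change (abs (RtoC (norm x))) with (Cmod (RtoC (norm x))).
    rewrite Cmod_R, Rabs_pos_eq by lra.
    specialize (HM y Hy). nra.
  - rewrite <- Hx, (norm_eq_zero x (eq_sym Hx)), (linear_zero L L_linear), norm_zero.
    lra.
Qed.

Lemma inv_bound_ext (T T' : X -> X) (c : R) :
  (forall x, T x = T' x) -> inv_bound T c -> inv_bound T' c.
Proof.
  intros E [S [S_linear [ST [TS S_norm]]]].
  exists S. split; [exact S_linear|split; [|split]]; intros x; rewrite <- ?E; auto.
Qed.

Lemma inv_bound_le (T : X -> X) (c c' : R) : c <= c' -> inv_bound T c -> inv_bound T c'.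
Proof.
  intros Hc [S [S_linear [ST [TS S_norm]]]].
  exists S. split; [exact S_linear|split; [exact ST|split; [exact TS|]]].
  intros x. eapply Rle_trans; [apply S_norm|].
  apply Rmult_le_compat_r; [apply norm_ge_0|exact Hc].
Qed.

Lemma inv_bound_id : inv_bound (fun x : X => x) 1.
Proof.
  exists (fun x => x). split; [exact is_linear_id|split; [easy|split; [easy|]]].
  intros x. lra.
Qed.

Lemma inv_bound_scal (T : X -> X) (c : R) (mu : C) :
  mu <> 0 -> 0 <= c -> inv_bound T c -> inv_bound (fun x => scal mu (T x)) (c / Cmod mu).
Proof.
  intros Hmu Hc [S [S_linear [ST [TS S_norm]]]].
  assert (Hmod : 0 < Cmod mu) by now apply Cmod_gt_0.
  exists (fun x => S (scal (Cinv mu) x)). split; [|split; [|split]].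
  - exact (is_linear_comp _ S (is_linear_scal_C (Cinv mu)) S_linear).
  - intros x. rewrite scal_assoc.
    replace (mult (Cinv mu) mu) with (RtoC 1) by (symmetry; exact (Cinv_l mu Hmu)).
    now rewrite scal_one.
  - intros x. rewrite TS, scal_assoc.
    replace (mult mu (Cinv mu)) with (RtoC 1) by (symmetry; exact (Cinv_r mu Hmu)).
    now rewrite scal_one.
  - intros x. eapply Rle_trans; [apply S_norm|].
    eapply Rle_trans; [apply Rmult_le_compat_l; [exact Hc|exact (norm_scal (Cinv mu) x)]|].
    change (abs (Cinv mu)) with (Cmod (Cinv mu)). rewrite Cmod_inv by exact Hmu.
    right. unfold Rdiv. ring.
Qed.

Lemma inv_bound_plus (A P : X -> X) (c q : R) :
  is_linear A -> is_linear P -> 0 <= c -> 0 <= q -> c * q < 1 ->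
  (forall x, norm (P x) <= q * norm x) ->
  inv_bound A c -> inv_bound (fun x => plus (A x) (P x)) (c / (1 - c * q)).
Proof.
  intros A_linear P_linear Hc Hq Hcq P_norm [R [R_linear [RA [AR R_norm]]]].
  set (K := fun x => R (P x)).
  assert (K_linear : is_linear K) by exact (is_linear_comp P R P_linear R_linear).
  assert (K_norm : forall x, norm (K x) <= c * q * norm x).
  { intros x. eapply Rle_trans; [apply R_norm|].
    rewrite Rmult_assoc. apply Rmult_le_compat_l; [exact Hc|apply P_norm]. }
  assert (AK : forall x, plus (A x) (P x) = A (plus x (K x))).
  { intros x. unfold K. now rewrite (linear_plus A A_linear), AR. }
  assert (Hcq0 : 0 <= c * q) by now apply Rmult_le_pos.
  set (J := id_plus_inv K).
  exists (fun y => J (R y)). split; [|split; [|split]].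
  - exact (is_linear_comp R J R_linear (id_plus_inv_linear K _ K_linear Hcq0 Hcq K_norm)).
  - intros x. unfold J. now rewrite AK, RA, (id_plus_invK K _ K_linear Hcq K_norm).
  - intros y. unfold J. now rewrite AK, (id_plus_invE K _ K_linear Hcq0 Hcq K_norm).
  - intros y. unfold J.
    eapply Rle_trans; [exact (id_plus_inv_norm K _ K_linear Hcq0 Hcq K_norm (R y))|].
    eapply Rle_trans; [apply Rmult_le_compat_l; [|apply R_norm]|].
    + apply Rlt_le, Rinv_0_lt_compat. lra.
    + right. unfold Rdiv. ring.
Qed.

Lemma shift_plus_split (lam : C) (t : R) (A B : X -> X) (x : X) :
  shift lam (fun x => plus (A x) (B x)) x
  = plus (shift (Cplus lam (RtoC t)) A x) (plus (scal (RtoC (- t)) x) (B x)).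
Proof.
  assert (Elam : lam = plus (Cplus lam (RtoC t)) (RtoC (- t))).
  { change (lam = Cplus (Cplus lam (RtoC t)) (RtoC (- t))).
    destruct lam. unfold Cplus, RtoC. simpl. f_equal; ring. }
  unfold shift. rewrite Elam at 1. rewrite scal_distr_r. apply plus_plus_shuffle.
Qed.

End ComplexOperators.

Lemma mindex_length (d n : nat) (alpha : list nat) : In alpha (mindex d n) -> length alpha = d.
Proof.
  revert n alpha. induction d as [|d IH]; intros n alpha H; cbn [mindex] in H.
  - now destruct H as [<-|[]].
  - apply in_flat_map in H as [k [_ Hk]]. apply in_map_iff in Hk as [t [<- Ht]].
    simpl. f_equal. exact (IH _ _ Ht).
Qed.

Lemma monom_from_scale (xi eta : nat -> R) (c : R) (alpha : list nat) (k : nat) :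
  (forall i, (k <= i < k + length alpha)%nat -> xi i = c * eta i) ->
  monom_from xi k alpha = c ^ mabs alpha * monom_from eta k alpha.
Proof.
  revert k. induction alpha as [|a t IH]; intros k H; simpl; [ring|].
  rewrite (IH (S k)) by (intros i Hi; apply H; simpl; lia).
  rewrite (H k) by (simpl; lia). rewrite Rpow_mult_distr, pow_add. ring.
Qed.

Lemma sumsq_scal (xi : nat -> R) (c : R) (l : list nat) :
  fold_right Rplus 0 (map (fun i => (c * xi i) ^ 2) l) =
  c ^ 2 * fold_right Rplus 0 (map (fun i => xi i ^ 2) l).
Proof. induction l as [|a l IH]; cbn [map fold_right]; [ring|]. rewrite IH. ring. Qed.

Lemma sumsq_ge0 (xi : nat -> R) (l : list nat) :
  0 <= fold_right Rplus 0 (map (fun i => xi i ^ 2) l).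
Proof. induction l as [|a l IH]; cbn [map fold_right]; [lra|]. nra. Qed.

Lemma sumsq_ge_term (xi : nat -> R) (l : list nat) (i : nat) :
  In i l -> xi i ^ 2 <= fold_right Rplus 0 (map (fun j => xi j ^ 2) l).
Proof.
  induction l as [|a l IH]; intros Hi; [destruct Hi|].
  pose proof (sumsq_ge0 xi l). pose proof (pow2_ge_0 (xi a)).
  destruct Hi as [<-|Hi]; cbn [map fold_right]; [lra|]. specialize (IH Hi). lra.
Qed.

Lemma vnorm_ge0 (d : nat) (xi : nat -> R) : 0 <= vnorm d xi.
Proof. apply sqrt_pos. Qed.

Lemma vnorm_scal (d : nat) (xi : nat -> R) (c : R) :
  vnorm d (fun i => c * xi i) = Rabs c * vnorm d xi.
Proof.
  unfold vnorm. rewrite sumsq_scal, sqrt_mult_alt by apply pow2_ge_0.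
  now rewrite <- sqrt_Rsqr_abs, Rsqr_pow2.
Qed.

Lemma Rabs_coord_le_vnorm (d : nat) (xi : nat -> R) (i : nat) :
  (i < d)%nat -> Rabs (xi i) <= vnorm d xi.
Proof.
  intros Hi. rewrite <- sqrt_Rsqr_abs, Rsqr_pow2. apply sqrt_le_1_alt.
  apply sumsq_ge_term, in_seq. lia.
Qed.

Lemma sector_half_pi_re (w : R) (z : C) : sector (PI / 2) w z -> w <= fst z.
Proof.
  intros [->|[r [t [Hr [Ht ->]]]]]; simpl; [lra|].
  apply Rabs_le_between in Ht.
  pose proof (cos_ge_0 t ltac:(lra) ltac:(lra)). nra.
Qed.

Lemma sector_half_pi_of_re_pos (z : C) : 0 < fst z -> sector (PI / 2) 0 z.
Proof.
  destruct z as [a b]. simpl. intros Ha. right.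
  set (u := b / a).
  assert (Hs : 0 < sqrt (1 + u²)) by (apply sqrt_lt_R0; pose proof (Rle_0_sqr u); lra).
  exists (a * sqrt (1 + u²)), (atan u). split; [|split].
  - now apply Rmult_lt_0_compat.
  - pose proof (atan_bound u). apply Rabs_le. lra.
  - rewrite cos_atan, sin_atan. unfold Cplus, RtoC; simpl. f_equal.
    + field. lra.
    + unfold u in *. field. lra.
Qed.

Lemma pow_succ_dominates (c : R) (n : nat) : 0 <= c ->
  exists omega, 0 < omega /\ forall rho, 0 <= rho -> c * (1 + rho) ^ n <= rho ^ S n + omega.
Proof.
  intros Hc.
  (* On [0, L] the left side is at most its value at L; beyond L,
     (1 + rho)^n <= (2 rho)^n and c 2^n <= rho. *)
  set (L := 2 ^ n * c + 1).
  assert (H2n : 0 <= 2 ^ n) by (apply pow_le; lra).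
  assert (HL : 1 <= L) by (unfold L; nra).
  assert (HLn : 0 <= c * (1 + L) ^ n) by (apply Rmult_le_pos; [exact Hc|apply pow_le; lra]).
  exists (c * (1 + L) ^ n + 1). split; [lra|].
  intros rho Hrho.
  pose proof (pow_le rho (S n) Hrho).
  destruct (Rle_lt_dec rho L) as [Hsmall|Hlarge].
  - assert ((1 + rho) ^ n <= (1 + L) ^ n) by (apply pow_incr; lra). nra.
  - assert (Hp : (1 + rho) ^ n <= 2 ^ n * rho ^ n)
      by (rewrite <- Rpow_mult_distr; apply pow_incr; lra).
    assert (Hr : 0 <= rho ^ n) by now apply pow_le.
    assert (c * 2 ^ n <= rho) by (unfold L in Hlarge; lra).
    simpl. nra.
Qed.

Section Symbols.
Context {X : CompleteNormedModule C_AbsRing}.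

Lemma sum_over_linear (s : list (list nat)) (c : list nat -> X -> X) (xi : nat -> R) :
  (forall alpha, In alpha s -> is_linear (c alpha)) -> is_linear (sum_over s c xi).
Proof.
  induction s as [|a s IH]; intros Hc.
  - exact is_linear_zero.
  - apply (is_linear_plus_fun (K := C_AbsRing) (U := X) (V := X)).
    + exact (is_linear_comp _ _ (Hc a (or_introl eq_refl)) (is_linear_scal_C _)).
    + apply IH. intros alpha H. apply Hc. now right.
Qed.

Lemma sum_over_scale (s : list (list nat)) (c : list nat -> X -> X) (xi eta : nat -> R)
    (r : R) (d m : nat) (x : X) :
  (forall alpha, In alpha s -> mabs alpha = m /\ length alpha = d) ->
  (forall i, (i < d)%nat -> xi i = r * eta i) ->
  sum_over s c xi x = scal (RtoC (r ^ m)) (sum_over s c eta x).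
Proof.
  intros Hs Hxi. induction s as [|a s IH]; simpl.
  - now rewrite scal_zero_r.
  - destruct (Hs a (or_introl eq_refl)) as [Ha_abs Ha_len].
    unfold sum_over in IH |- *. simpl.
    rewrite IH by (intros alpha H; apply Hs; now right).
    unfold monom. rewrite (monom_from_scale xi eta r a 0) by (intros i Hi; apply Hxi; lia).
    now rewrite scal_distr_l, scal_assoc, Ha_abs, RtoC_mult.
Qed.

Lemma principal_scale (d m : nat) (am : list nat -> X -> X) (xi eta : nat -> R)
    (r : R) (x : X) :
  (forall i, (i < d)%nat -> xi i = r * eta i) ->
  principal d m am xi x = scal (RtoC (r ^ m)) (principal d m am eta x).
Proof.
  apply (sum_over_scale _ _ _ _ _ d m). intros alpha Ha.
  apply filter_In in Ha as [Ha Habs]. split.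
  - now apply Nat.eqb_eq.
  - exact (mindex_length _ _ _ Ha).
Qed.

Lemma principal_linear (d m : nat) (am : list nat -> X -> X) (xi : nat -> R) :
  (forall alpha, In alpha (mindex d m) -> mabs alpha = m -> is_linear (am alpha)) ->
  is_linear (principal d m am xi).
Proof.
  intros Ham. apply sum_over_linear. intros alpha Ha.
  apply filter_In in Ha as [Ha Habs]. apply Ham; [exact Ha|now apply Nat.eqb_eq].
Qed.

Lemma poly_sym_linear (d n : nat) (b : list nat -> X -> X) (xi : nat -> R) :
  (forall alpha, In alpha (mindex d n) -> is_linear (b alpha)) -> is_linear (poly_sym d n b xi).
Proof. apply sum_over_linear. Qed.

Lemma principal_vnorm0 (d m : nat) (am : list nat -> X -> X) (xi : nat -> R) (x : X) :
  (1 <= m)%nat -> vnorm d xi = 0 -> principal d m am xi x = zero.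
Proof.
  intros Hm Hxi. rewrite (principal_scale d m am xi xi 0).
  - now rewrite pow_i, scal_zero_l by lia.
  - intros i Hi. pose proof (Rabs_coord_le_vnorm d xi i Hi).
    pose proof (Rabs_pos (xi i)). assert (xi i = 0) by (apply Rabs_eq_0; lra). lra.
Qed.

Lemma poly_sym_norm_le (d n : nat) (b : list nat -> X -> X) (N : R) :
  (forall alpha, In alpha (mindex d n) -> is_linear (b alpha)) ->
  Nzero d n b = Finite N ->
  forall xi x, norm (poly_sym d n b xi x) <= N * (1 + vnorm d xi) ^ n * norm x.
Proof.
  intros Hb HN xi.
  assert (Hp : 0 < (1 + vnorm d xi) ^ n) by (apply pow_lt; pose proof (vnorm_ge0 d xi); lra).
  apply linear_norm_le_of_unit_ball; [now apply poly_sym_linear|].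
  intros y Hy.
  destruct (Lub_Rbar_correct (fun r => exists (xi : nat -> R) (x : X), norm x <= 1 /\
     r = norm (poly_sym d n b xi x) / (1 + vnorm d xi) ^ n)) as [Hub _].
  unfold Nzero in HN. rewrite HN in Hub.
  assert (H : norm (poly_sym d n b xi y) / (1 + vnorm d xi) ^ n <= N)
    by (apply Hub; now exists xi, y).
  apply Rmult_le_compat_r with (r := (1 + vnorm d xi) ^ n) in H; [|lra].
  unfold Rdiv in H. now rewrite Rmult_assoc, Rinv_l, Rmult_1_r in H by lra.
Qed.

Lemma principal_resolvent (d m : nat) (am : list nat -> X -> X) (kappa : R)
    (xi : nat -> R) (mu : C) :
  (1 <= m)%nat -> normally_elliptic d m am kappa -> 0 < fst mu ->
  inv_bound (shift mu (principal d m am xi)) (kappa / (vnorm d xi ^ m + Cmod mu)).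
Proof.
  intros Hm [Hk Hell] Hmu.
  assert (Hmu0 : mu <> 0) by (intros E; rewrite E in Hmu; simpl in Hmu; lra).
  assert (Hmod : 0 < Cmod mu) by now apply Cmod_gt_0.
  destruct (Rle_lt_or_eq_dec _ _ (vnorm_ge0 d xi)) as [Hrho|Hrho].
  - set (rho := vnorm d xi) in *. set (r := rho ^ m).
    assert (Hr : 0 < r) by now apply pow_lt.
    set (eta := fun i => / rho * xi i).
    assert (Heta : vnorm d eta = 1).
    { unfold eta. rewrite vnorm_scal, Rabs_pos_eq by (apply Rlt_le, Rinv_0_lt_compat, Hrho).
      fold rho. field. lra. }
    (* mu + a_m(xi) = r (nu + a_m(eta)) with eta = xi / |xi| on the unit sphere *)
    set (nu := Cmult (RtoC (/ r)) mu).
    assert (Hnu : sector (PI / 2) 0 nu).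
    { apply sector_half_pi_of_re_pos. unfold nu. simpl.
      pose proof (Rinv_0_lt_compat r Hr). nra. }
    assert (E : forall x, scal (RtoC r) (shift nu (principal d m am eta) x)
                          = shift mu (principal d m am xi) x).
    { intros x. unfold shift.
      rewrite (principal_scale d m am xi eta rho x) by (intros i _; unfold eta; field; lra).
      rewrite scal_distr_l, scal_assoc. do 2 f_equal.
      unfold nu. change (Cmult (RtoC r) (Cmult (RtoC (/ r)) mu) = mu).
      rewrite Cmult_assoc, <- RtoC_mult, Rinv_r by lra. apply Cmult_1_l. }
    assert (Hc : kappa / (1 + Cmod (Cminus nu 0)) / Cmod (RtoC r) = kappa / (r + Cmod mu)).
    { replace (Cminus nu 0) with nu by (unfold Cminus; ring).
      unfold nu. rewrite Cmod_mult, !Cmod_R, Rabs_pos_eq by (apply Rlt_le, Rinv_0_lt_compat, Hr).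
      rewrite Rabs_pos_eq by lra. field. lra. }
    rewrite <- Hc. apply (inv_bound_ext _ _ _ E), inv_bound_scal.
    + intros Er. apply RtoC_inj in Er. lra.
    + apply Rdiv_le_0_compat; [lra|]. pose proof (Cmod_ge_0 (Cminus nu 0)). lra.
    + now apply Hell.
  - apply (inv_bound_ext (fun x => scal mu x)).
    { intros x. unfold shift. now rewrite principal_vnorm0, plus_zero_r. }
    apply (inv_bound_le _ (1 / Cmod mu)).
    { rewrite <- Hrho, pow_i, Rplus_0_l by lia. apply Rmult_le_compat_r; [|lra].
      now apply Rlt_le, Rinv_0_lt_compat. }
    exact (inv_bound_scal (fun x => x) 1 mu Hmu0 Rle_0_1 inv_bound_id).
Qed.

Lemma lower_order_norm_le (d n : nat) (b : list nat -> X -> X) (N t : R)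
    (xi : nat -> R) (x : X) :
  (forall alpha, In alpha (mindex d n) -> is_linear (b alpha)) ->
  Nzero d n b = Finite N ->
  norm (plus (scal (RtoC (- t)) x) (poly_sym d n b xi x))
  <= (Rabs t + Rabs N * (1 + vnorm d xi) ^ n) * norm x.
Proof.
  intros Hb HN.
  eapply Rle_trans; [exact (norm_triangle _ _)|].
  assert (Ht : norm (scal (RtoC (- t)) x) <= Rabs t * norm x).
  { eapply Rle_trans; [exact (norm_scal _ _)|].
    change (abs (RtoC (- t))) with (Cmod (RtoC (- t))).
    rewrite Cmod_R, Rabs_Ropp. lra. }
  assert (HB := poly_sym_norm_le d n b N Hb HN xi x).
  assert (N * (1 + vnorm d xi) ^ n * norm x <= Rabs N * (1 + vnorm d xi) ^ n * norm x).
  { apply Rmult_le_compat_r; [apply norm_ge_0|].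
    apply Rmult_le_compat_r; [|apply Rle_abs].
    apply pow_le. pose proof (vnorm_ge0 d xi). lra. }
  lra.
Qed.

Lemma perturbed_principal_resolvent (d m n : nat) (am b : list nat -> X -> X)
    (kappa N t : R) (xi : nat -> R) (mu : C) :
  (1 <= m)%nat ->
  (forall alpha, In alpha (mindex d m) -> mabs alpha = m -> is_linear (am alpha)) ->
  normally_elliptic d m am kappa ->
  (forall alpha, In alpha (mindex d n) -> is_linear (b alpha)) ->
  Nzero d n b = Finite N ->
  0 < fst mu ->
  kappa * (Rabs t + Rabs N * (1 + vnorm d xi) ^ n) <= (vnorm d xi ^ m + Cmod mu) / 2 ->
  inv_bound (fun x => plus (shift mu (principal d m am xi) x)
                           (plus (scal (RtoC (- t)) x) (poly_sym d n b xi x)))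
            (2 * kappa / (vnorm d xi ^ m + Cmod mu)).
Proof.
  intros Hm Ham Hell Hb HN Hmu HQ.
  assert (Hk : 1 <= kappa) by exact (proj1 Hell).
  set (D := vnorm d xi ^ m + Cmod mu) in *.
  set (Q := Rabs t + Rabs N * (1 + vnorm d xi) ^ n) in *.
  assert (HD : 0 < D).
  { assert (0 < Cmod mu) by (apply Cmod_gt_0; intros E; rewrite E in Hmu; simpl in Hmu; lra).
    pose proof (pow_le _ m (vnorm_ge0 d xi)). unfold D. lra. }
  assert (HQ0 : 0 <= Q).
  { pose proof (Rabs_pos t). pose proof (Rabs_pos N).
    pose proof (pow_le (1 + vnorm d xi) n ltac:(pose proof (vnorm_ge0 d xi); lra)).
    unfold Q. nra. }
  set (c := kappa / D).
  assert (Hc : 0 < c) by (apply Rdiv_lt_0_compat; lra).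
  assert (HcQ : c * Q <= / 2).
  { unfold c, Rdiv. rewrite Rmult_comm, <- Rmult_assoc.
    apply (Rmult_le_reg_r D); [exact HD|].
    rewrite Rmult_assoc, Rinv_l, Rmult_1_r by lra. lra. }
  apply (inv_bound_le _ (c / (1 - c * Q))).
  { replace (2 * kappa / D) with (2 * c) by (unfold c; field; lra).
    apply (Rmult_le_reg_r (1 - c * Q)); [lra|].
    unfold Rdiv. rewrite Rmult_assoc, Rinv_l, Rmult_1_r by lra. nra. }
  apply inv_bound_plus.
  - apply (is_linear_plus_fun (K := C_AbsRing) (U := X) (V := X));
      [apply is_linear_scal_C|now apply principal_linear].
  - apply (is_linear_plus_fun (K := C_AbsRing) (U := X) (V := X));
      [apply is_linear_scal_C|now apply poly_sym_linear].
  - lra.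
  - exact HQ0.
  - lra.
  - intros x. now apply lower_order_norm_le.
  - now apply principal_resolvent.
Qed.

End Symbols.

Theorem proposition4p3 :
  forall (X : CompleteNormedModule C_AbsRing) (d m : nat) (kappa : R)
    (am : list nat -> X -> X),
    (1 <= m)%nat ->
    (forall alpha, In alpha (mindex d m) -> mabs alpha = m -> is_linear (am alpha)) ->
    (exists alpha, In alpha (mindex d m) /\ mabs alpha = m /\
       exists x : X, am alpha x <> zero) ->
    normally_elliptic d m am kappa ->
    exists phi gamma : R, 0 < phi < PI /\ 0 < gamma /\
      forall N : R, exists omega : R, 0 < omega /\
        forall b : list nat -> X -> X,
          (forall alpha, In alpha (mindex d (m - 1)) -> is_linear (b alpha)) ->
          Nzero d (m - 1) b = Finite N ->
          forall (xi : nat -> R) (lam : C),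
            sector phi (- gamma * vnorm d xi ^ m + omega) lam ->
            inv_bound
              (shift lam (fun x => plus (principal d m am xi x) (poly_sym d (m - 1) b xi x)))
              ((4 * kappa + 2) /
                 (vnorm d xi ^ m + Cmod (Cplus lam (RtoC (gamma * vnorm d xi ^ m))))).
Proof.
  intros X d m kappa am Hm Ham _ Hell.
  pose proof (proj1 Hell) as Hk.
  exists (PI / 2), (/ (4 * kappa)).
  split; [pose proof PI_RGT_0; lra|split; [apply Rinv_0_lt_compat; lra|]].
  intros N.
  destruct (pow_succ_dominates (4 * kappa * Rabs N) (m - 1)) as [omega [Hom Hdom]].
  { pose proof (Rabs_pos N). nra. }
  exists omega. split; [exact Hom|].
  intros b Hb HN xi lam Hlam%sector_half_pi_re.
  set (rho := vnorm d xi) in *.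
  assert (Hrm : 0 <= rho ^ m) by apply pow_le, vnorm_ge0.
  specialize (Hdom rho (vnorm_ge0 d xi)). replace (S (m - 1)) with m in Hdom by lia.
  set (g := / (4 * kappa) * rho ^ m).
  assert (Hg : kappa * g = rho ^ m / 4) by (unfold g; field; lra).
  assert (Hmu : omega <= fst (Cplus lam (RtoC g))).
  { change (omega <= fst lam + g). unfold g. lra. }
  assert (HD : rho ^ m + omega <= rho ^ m + Cmod (Cplus lam (RtoC g))).
  { pose proof (Rle_abs (fst (Cplus lam (RtoC g)))).
    pose proof (re_le_Cmod (Cplus lam (RtoC g))). unfold Re in *. lra. }
  apply (inv_bound_ext _ _ _ (fun x => eq_sym (shift_plus_split lam g _ _ x))).
  apply (inv_bound_le _ (2 * kappa / (rho ^ m + Cmod (Cplus lam (RtoC g))))).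
  { unfold Rdiv. apply Rmult_le_compat_r; [apply Rlt_le, Rinv_0_lt_compat|]; lra. }
  apply (perturbed_principal_resolvent d m (m - 1) am b kappa N); auto; [lra|].
  rewrite Rabs_pos_eq
    by (unfold g; apply Rmult_le_pos; [apply Rlt_le, Rinv_0_lt_compat; lra|exact Hrm]).
  fold rho. rewrite Rmult_plus_distr_l, Hg. nra.
Qed.
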